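(* Let $N\ge1$, $f:\mathbb{N}^N\to\mathbb{N}$, $p$ a prime and $n\ge1$. Let $U=\{\mathbf{x}\in\mathbb{N}^N:\mathbf{x}\ne\mathbf{0},\ x_i\in\{0,1\}\ \forall i\}$ and $h(\mathbf{s})=f(\mathbf{s})^p$ for $\mathbf{s}\in U$, $h(\mathbf{s})=0$ otherwise. Then $$\binom{pn}{p\mathbf{1}}_f\equiv\sum_{k=1}^{n}\ \sum_{\{\mathbf{b}_1,\dots,\mathbf{b}_k\}}\frac{(pn)!}{(p!)^k\,(p(n-k))!}\,f(\mathbf{0})^{p(n-k)}\,h(\mathbf{b}_1)\cdots h(\mathbf{b}_k)\pmod{pn},$$ where the inner sum runs over all vector partitions $\{\mathbf{b}_1,\dots,\mathbf{b}_k\}$ of $\mathbf{1}=(1,\dots,1)\in\mathbb{N}^N$ into $k$ non-zero parts (terms with $k>N$ are absent).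
   Context: $\mathbb{N}=\{0,1,2,\dots\}$. A vector partition of $\mathbf{1}$ into $k$ non-zero parts is a multiset of $k$ non-zero vectors in $\mathbb{N}^N$ summing to $\mathbf{1}$. For $k\ge0$ and $\mathbf{x}\in\mathbb{N}^N$, $\binom{k}{\mathbf{x}}_f=\sum_{\mathbf{m}_1+\cdots+\mathbf{m}_k=\mathbf{x}} f(\mathbf{m}_1)\cdots f(\mathbf{m}_k)$ over tuples of vectors in $\mathbb{N}^N$. Convention $0^0=1$. *)

From mathcomp Require Import all_boot.
Set Implicit Arguments. Unset Strict Implicit. Unset Printing Implicit Defensive.

Definition vec (N : nat) := {ffun 'I_N -> nat}.

(* binom(k, x)_f = sum over k-tuples (m_1,...,m_k) of vectors with
   m_1 + ... + m_k = x of f(m_1)...f(m_k).  Every such m_j satisfies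
   m_j(i) <= x(i) <= max_i x(i) =: B, so we range over tuples of vectors with
   entries in 'I_(B+1); this loses no tuple. *)
Definition binomf (N : nat) (f : vec N -> nat) (k : nat) (x : vec N) : nat :=
  \sum_(m : {ffun 'I_k -> {ffun 'I_N -> 'I_(\max_(i < N) x i).+1}}
          | [forall i : 'I_N, \sum_(j < k) (m j i : nat) == x i])
     \prod_(j < k) f [ffun i => (m j i : nat)].

Definition hfun (N p : nat) (f : vec N -> nat) (s : vec N) : nat :=
  if (s != [ffun _ => 0]) && [forall i, s i <= 1] then f s ^ p else 0.

Definition vec_of01 (N : nat) (b : {ffun 'I_N -> 'I_2}) : vec N :=
  [ffun i => (b i : nat)].

(* A vector partition is a multiset,
   encoded by its multiplicity function mu; every part of a partition of 1
   has entries in {0,1}, so mu ranges over functions on {0,1}-vectors. *)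
Definition vpart_sum (N k : nat) (g : vec N -> nat) : nat :=
  \sum_(mu : {ffun {ffun 'I_N -> 'I_2} -> 'I_k.+1}
          | [&& \sum_(b : {ffun 'I_N -> 'I_2}) (mu b : nat) == k,
                (mu [ffun _ => (ord0 : 'I_2)] : nat) == 0
              & [forall i : 'I_N,
                   \sum_(b : {ffun 'I_N -> 'I_2}) (mu b : nat) * (b i : nat) == 1]])
     \prod_(b : {ffun 'I_N -> 'I_2}) g (vec_of01 b) ^ (mu b : nat).

(* Group the words (m_1, ..., m_pn) by their letter counts c, where c v is the
   number of j with m_j = v.  A class has the multinomial size
   (pn)! / prod_v (c v)!, and c v times that size is divisible by pn, hence so
   is gcd_v (c v) times it.  The column condition sum_v (c v) v = p.1 makes
   that gcd divide p, so the class vanishes modulo pn unless p divides every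
   c v.  Such counts charge only 0/1-vectors: p copies of each part of a vector
   partition {b_1, ..., b_k} of 1 and p(n - k) copies of 0, and their class
   contributes exactly the k-th summand of the right-hand side. *)

From mathcomp Require Import all_boot zify.
Set Implicit Arguments. Unset Strict Implicit. Unset Printing Implicit Defensive.

Lemma leq_summand (I : finType) (F : I -> nat) i : F i <= \sum_j F j.
Proof. by rewrite (bigD1 i) //= leq_addr. Qed.

Section Multinomial.
Variable V : finType.

Definition mult K (m : {ffun 'I_K -> V}) (v : V) : nat := \sum_(j < K) (m j == v).

Definition multinomial K (c : V -> nat) : nat :=
  \sum_(m : {ffun 'I_K -> V}) [forall v, mult m v == c v].

Lemma sum_by_mult K (m : {ffun 'I_K -> V}) (F : V -> nat) :
  \sum_(j < K) F (m j) = \sum_v mult m v * F v.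
Proof.
under [RHS]eq_bigr => v _ do rewrite big_distrl.
rewrite exchange_big; apply: eq_bigr => j _ /=.
rewrite (bigD1 (m j)) //= eqxx mul1n big1 ?addn0 // => v.
by rewrite eq_sym => /negbTE ->.
Qed.

Lemma prod_by_mult K (m : {ffun 'I_K -> V}) (F : V -> nat) :
  \prod_(j < K) F (m j) = \prod_v F v ^ mult m v.
Proof.
under [RHS]eq_bigr => v _ do rewrite (big_morph _ (expnD (F v)) (expn0 (F v))).
rewrite exchange_big; apply: eq_bigr => j _ /=.
rewrite (bigD1 (m j)) //= eqxx expn1 big1 ?muln1 // => v.
by rewrite eq_sym => /negbTE ->.
Qed.

Lemma sum_mult K (m : {ffun 'I_K -> V}) : \sum_v mult m v = K.
Proof.
rewrite -[RHS]card_ord -sum1_card (sum_by_mult m (fun _ => 1)).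
by under [RHS]eq_bigr do rewrite muln1.
Qed.

Definition fcons K (v : V) (m : {ffun 'I_K -> V}) : {ffun 'I_K.+1 -> V} :=
  [ffun j => if unlift ord0 j is Some j' then m j' else v].

Lemma sum_ffunS K (F : {ffun 'I_K.+1 -> V} -> nat) :
  \sum_m F m = \sum_v \sum_(m : {ffun 'I_K -> V}) F (fcons v m).
Proof.
rewrite pair_big /= (reindex (fun vm : V * {ffun 'I_K -> V} => fcons vm.1 vm.2)) //=.
exists (fun m => (m ord0, [ffun j => m (lift ord0 j)])) => [[v m] _|m _] /=.
  congr (_, _); first by rewrite ffunE unlift_none.
  by apply/ffunP => j; rewrite !ffunE liftK.
by apply/ffunP => j; rewrite !ffunE; case: unliftP => [j'|] ->; rewrite ?ffunE.
Qed.

Lemma mult_fcons K v (m : {ffun 'I_K -> V}) w :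
  mult (fcons v m) w = (v == w) + mult m w.
Proof.
rewrite /mult big_ord_recl ffunE unlift_none; congr (_ + _).
by apply: eq_bigr => j _; rewrite ffunE liftK.
Qed.

Lemma multinomial0 (c : V -> nat) : (forall v, c v = 0) -> multinomial 0 c = 1.
Proof.
move=> c0; rewrite /multinomial (eq_bigr (fun=> 1)) => [|m _].
  by rewrite sum1_card card_ffun card_ord.
suff -> : [forall v, mult m v == c v] by [].
by apply/forallP => v; rewrite /mult big_ord0 c0.
Qed.

Definition decr (c : V -> nat) (v : V) : V -> nat := fun w => c w - (v == w).

Lemma multinomialS K (c : V -> nat) :
  multinomial K.+1 c = \sum_(v | 0 < c v) multinomial K (decr c v).
Proof.
rewrite /multinomial sum_ffunS (bigID (fun v => 0 < c v)) /= [X in _ + X]big1 ?addn0.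
  apply: eq_bigr => v cv_gt0; apply: eq_bigr => m _; congr (nat_of_bool _).
  apply: eq_forallb => w; rewrite mult_fcons /decr.
  by case: (v =P w) => [<-|_]; apply/eqP/eqP; lia.
move=> v; rewrite -eqn0Ngt => /eqP cv0; apply: big1 => m _.
apply/eqP; rewrite eqb0; apply/forallPn.
by exists v; rewrite mult_fcons eqxx cv0.
Qed.

Lemma prod_fact_decr (c : V -> nat) v : 0 < c v ->
  \prod_w (c w)`! = c v * \prod_w (decr c v w)`!.
Proof.
move=> cv_gt0; rewrite /decr (bigD1 v) //= [in RHS](bigD1 v) //= eqxx mulnA; congr (_ * _).
  by case: (c v) cv_gt0 => // k _; rewrite subn1 factS.
by apply: eq_bigr => w; rewrite eq_sym => /negbTE ->; rewrite subn0.
Qed.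

Lemma sum_decr (c : V -> nat) v : 0 < c v ->
  \sum_w decr c v w = (\sum_w c w).-1.
Proof.
move=> cv_gt0; rewrite /decr (bigD1 v) //= [in RHS](bigD1 v) //= eqxx.
rewrite (eq_bigr c) => [|w]; last by rewrite eq_sym => /negbTE ->; rewrite subn0.
lia.
Qed.

Lemma multinomial_fact K (c : V -> nat) :
  \sum_v c v = K -> multinomial K c * \prod_v (c v)`! = K`!.
Proof.
elim: K c => [|K IH] c sum_c.
  have c0 v : c v = 0 by move/eqP: sum_c; rewrite sum_nat_eq0 => /forall_inP/(_ v isT)/eqP.
  by rewrite multinomial0 // big1 // => v _; rewrite c0.
rewrite multinomialS big_distrl /=.
transitivity (\sum_(v | 0 < c v) c v * K`!).
  apply: eq_bigr => v cv_gt0.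
  by rewrite (prod_fact_decr cv_gt0) mulnCA IH // sum_decr // sum_c.
rewrite factS -{1}sum_c big_distrl /= [RHS](bigID (fun v => 0 < c v)) /=.
by rewrite [X in _ + X]big1 ?addn0 // => v; rewrite -eqn0Ngt => /eqP ->.
Qed.

Lemma multinomial_eq0 K (c : V -> nat) : \sum_v c v != K -> multinomial K c = 0.
Proof.
move=> sum_c; apply: big1 => m _; apply/eqP; rewrite eqb0.
apply: contra sum_c => /forallP m_c.
by rewrite -(sum_mult m); apply/eqP/eq_bigr => v _; rewrite (eqP (m_c v)).
Qed.

Lemma mul_multinomial K (c : V -> nat) v : 0 < c v ->
  c v * multinomial K.+1 c = K.+1 * multinomial K (decr c v).
Proof.
move=> cv_gt0; have [sum_c|sum_c] := eqVneq (\sum_w c w) K.+1; last first.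
  rewrite !multinomial_eq0 ?muln0 // sum_decr //.
  by apply: contra sum_c => /eqP <-; rewrite prednK // (leq_trans cv_gt0) ?leq_summand.
have P_gt0 : 0 < \prod_w (decr c v w)`! by apply: prodn_gt0 => w; apply: fact_gt0.
apply/eqP; rewrite -(eqn_pmul2r P_gt0) mulnAC mulnC -prod_fact_decr //.
by rewrite multinomial_fact // -mulnA multinomial_fact // sum_decr // sum_c.
Qed.

Lemma dvdn_multinomial K (c : V -> nat) v : K %| c v * multinomial K c.
Proof.
have [->|cv_gt0] := posnP (c v); first by rewrite dvdn0.
case: K => [|K]; last by rewrite mul_multinomial // dvdn_mulr.
by rewrite multinomial_eq0 ?muln0 // -lt0n (leq_trans cv_gt0) ?leq_summand.
Qed.

Lemma dvdn_gcd_multinomial K (c : V -> nat) :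
  K %| \big[gcdn/0]_v c v * multinomial K c.
Proof.
apply: (big_ind (fun g => K %| g * multinomial K c)) => [|g1 g2|v _].
- by rewrite mul0n dvdn0.
- by rewrite muln_gcdl dvdn_gcd => -> ->.
- exact: dvdn_multinomial.
Qed.

Definition multf K (m : {ffun 'I_K -> V}) : {ffun V -> 'I_K.+1} :=
  [ffun v => inord (mult m v)].

Lemma multfE K (m : {ffun 'I_K -> V}) v : multf m v = mult m v :> nat.
Proof. by rewrite ffunE inordK // ltnS -{2}(sum_mult m) leq_summand. Qed.

Lemma sum_by_multf K (F : {ffun V -> 'I_K.+1} -> nat) :
  \sum_(m : {ffun 'I_K -> V}) F (multf m) =
  \sum_(c : {ffun V -> 'I_K.+1}) multinomial K (fun v => c v) * F c.
Proof.
rewrite (partition_big (@multf K) xpredT) //=; apply: eq_bigr => c _.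
rewrite big_distrl /= big_mkcond; apply: eq_bigr => m _ /=.
have -> : [forall v, mult m v == c v] = (multf m == c).
  apply/forallP/eqP => [m_c|<- v]; last by rewrite multfE.
  by apply/ffunP => v; apply/val_inj; rewrite /= multfE (eqP (m_c v)).
by case: eqP => [->|_]; rewrite ?mul1n ?mul0n.
Qed.

End Multinomial.

Lemma hfun_vec_of01 N p (f : vec N -> nat) (b : {ffun 'I_N -> 'I_2}) :
  b != [ffun _ => ord0] -> hfun p f (vec_of01 b) = f (vec_of01 b) ^ p.
Proof.
move=> b_neq0; rewrite /hfun ifT //; apply/andP; split.
  apply: contra b_neq0 => /eqP/ffunP b0; apply/eqP/ffunP => i; apply/val_inj.
  by have := b0 i; rewrite !ffunE.
by apply/forallP => i; rewrite ffunE -ltnS.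
Qed.

Section Congruence.
Variables (N p n B : nat) (f : vec N -> nat).
Hypotheses (N_gt0 : 0 < N) (p_prime : prime p) (B_gt0 : 0 < B).

Local Notation K := (p * n).
Local Notation V := {ffun 'I_N -> 'I_B.+1}.
Local Notation V01 := {ffun 'I_N -> 'I_2}.
Local Notation counts := {ffun V -> 'I_K.+1}.

Let p_gt0 : 0 < p := prime_gt0 p_prime.

Definition vec_of (v : V) : vec N := [ffun i => v i : nat].
Definition zeroV : V := [ffun _ => ord0].
Definition zero01 : V01 := [ffun _ => ord0].

Definition column_sums_p (c : counts) := [forall i, \sum_v c v * v i == p].
Definition pscaled (c : counts) := [forall v, p %| c v].
Definition surviving (c : counts) :=
  [&& pscaled c, column_sums_p c & \sum_v (c v : nat) == K].
Definition weight (c : counts) := \prod_v f (vec_of v) ^ c v.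
(* The number of parts of the vector partition of 1 encoded by a surviving [c]. *)
Definition level (c : counts) := n - c zeroV %/ p.

Lemma sum_words_by_counts :
  \sum_(m : {ffun 'I_K -> V} | [forall i, \sum_(j < K) (m j i : nat) == p])
     \prod_(j < K) f (vec_of (m j))
  = \sum_(c : counts)
      multinomial K (fun v => c v) * (if column_sums_p c then weight c else 0).
Proof.
rewrite big_mkcond -sum_by_multf; apply: eq_bigr => m _.
have -> : column_sums_p (multf m) = [forall i, \sum_(j < K) (m j i : nat) == p].
  apply: eq_forallb => i; rewrite (sum_by_mult m (fun v => v i : nat)).
  by under eq_bigr do rewrite multfE.
rewrite /weight (prod_by_mult m (fun v => f (vec_of v))).
by congr (if _ then _ else _); apply: eq_bigr => v _; rewrite multfE.
Qed.

Lemma dvdn_multinomial_unscaled (c : counts) :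
  column_sums_p c -> ~~ pscaled c -> K %| multinomial K (fun v => c v).
Proof.
move=> /forallP/(_ (Ordinal N_gt0))/eqP col_c unscaled.
have := dvdn_gcd_multinomial K (fun v => c v); set g := \big[gcdn/0]_v _.
have g_dvd v : g %| c v by have := dvdnn g; rewrite {2}/g => /dvdn_biggcdP; apply.
have g_p : g %| p by rewrite -col_c dvdn_sum // => v _; rewrite dvdn_mulr.
case/primeP: p_prime => _ /(_ g g_p) /orP [/eqP ->|/eqP gp]; first by rewrite mul1n.
by case/negP: unscaled; apply/forallP => v; rewrite (dvdn_trans _ (g_dvd v)) ?gp.
Qed.

Let two_le_B : 2 <= B.+1. Proof. by rewrite ltnS. Qed.

Definition lift01 (b : V01) : V := [ffun i => widen_ord two_le_B (b i)].
Definition proj01 (v : V) : V01 := [ffun i => inord (v i)].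
Definition is01 (v : V) := [forall i, v i <= 1].

Lemma lift01E b i : lift01 b i = b i :> nat.
Proof. by rewrite ffunE. Qed.

Lemma lift01K : cancel lift01 proj01.
Proof. by move=> b; apply/ffunP => i; apply/val_inj; rewrite /= ffunE inordK lift01E. Qed.

Lemma proj01K v : is01 v -> lift01 (proj01 v) = v.
Proof.
move=> /forallP v01; apply/ffunP => i; apply/val_inj.
by rewrite /= lift01E ffunE inordK // ltnS v01.
Qed.

Lemma is01_lift01 b : is01 (lift01 b).
Proof. by apply/forallP => i; rewrite lift01E -ltnS. Qed.

Lemma lift01_zero : lift01 zero01 = zeroV.
Proof. by apply/ffunP => i; apply/val_inj; rewrite /= lift01E !ffunE. Qed.

Lemma lift01_eq0 b : (lift01 b == zeroV) = (b == zero01).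
Proof. by rewrite -lift01_zero (can_eq lift01K). Qed.

Lemma vec_of_lift01 b : vec_of (lift01 b) = vec_of01 b.
Proof. by apply/ffunP => i; rewrite !ffunE. Qed.

Lemma big_is01 (R : Type) (idx : R) (op : Monoid.com_law idx) (F : V -> R) :
  (forall v, ~~ is01 v -> F v = idx) ->
  \big[op/idx]_v F v = \big[op/idx]_b F (lift01 b).
Proof.
move=> F_non01; rewrite (bigID is01) /= [X in op _ X]big1 ?Monoid.mulm1 //.
rewrite (reindex_onto lift01 proj01) => [|v]; last exact: proj01K.
by apply: eq_bigl => b; rewrite is01_lift01 lift01K eqxx.
Qed.

Lemma surviving_non01 (c : counts) v : surviving c -> ~~ is01 v -> c v = 0 :> nat.
Proof.
move=> /and3P [/forallP scaled /forallP col _] /forallPn [i]; rewrite -ltnNge => vi_gt1.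
have := leq_summand (fun w => c w * w i) v; rewrite (eqP (col i)) /=.
case/dvdnP: (scaled v) => [[|a] ->] //; have := p_gt0.
by move: vi_gt1; move: (v i : nat) => x; nia.
Qed.

Lemma surviving_zero (c : counts) : surviving c -> c zeroV = p * (n - level c) :> nat.
Proof.
move=> /and3P [/forallP scaled _ /eqP sum_c].
have := leq_summand (fun v => c v : nat) zeroV; rewrite sum_c /level /=.
case/dvdnP: (scaled zeroV) => a ->; rewrite mulnK // mulnC leq_pmul2l // => a_le_n.
by rewrite subKn.
Qed.

Lemma leq_surviving_lift01 (c : counts) b : surviving c -> b != zero01 ->
  c (lift01 b) %/ p <= level c.
Proof.
move=> surv b_neq0; have c0 := surviving_zero surv.
have /and3P [/forallP scaled _ /eqP sum_c] := surv.
have : c zeroV + c (lift01 b) <= \sum_v (c v : nat).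
  rewrite (bigD1 zeroV) //= leq_add2l (bigD1 (lift01 b)) ?lift01_eq0 //=.
  exact: leq_addr.
rewrite sum_c c0 -(divnK (scaled (lift01 b))) -(leq_pmul2l p_gt0) mulnBr.
have : level c <= n := leq_subr _ _.
by move: (c _ %/ p) (level c) => q l; nia.
Qed.

Section FixedLevel.
Variable k : nat.
Hypothesis k_le_n : k <= n.

Local Notation vparts := {ffun V01 -> 'I_k.+1}.

Definition is_vpart (mu : vparts) :=
  [&& \sum_b (mu b : nat) == k, (mu zero01 : nat) == 0
    & [forall i, \sum_b (mu b : nat) * (b i : nat) == 1]].

Definition counts_of_vpart (mu : vparts) : counts :=
  [ffun v => inord (if v == zeroV then p * (n - k)
                    else if is01 v then p * mu (proj01 v) else 0)].

Definition vpart_of_counts (c : counts) : vparts :=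
  [ffun b => if b == zero01 then ord0 else inord (c (lift01 b) %/ p)].

Lemma counts_of_vpartE mu v : counts_of_vpart mu v =
  (if v == zeroV then p * (n - k) else if is01 v then p * mu (proj01 v) else 0) :> nat.
Proof.
rewrite ffunE inordK // ltnS; case: ifP => _; first by rewrite leq_mul2l leq_subr orbT.
by case: ifP => // _; rewrite leq_mul2l -ltnS (leq_trans (ltn_ord _)) ?orbT.
Qed.

Lemma big_counts_of_vpart (R : Type) (idx : R) (op : Monoid.com_law idx)
    (F : V -> nat -> R) mu :
  (forall v, F v 0 = idx) ->
  \big[op/idx]_v F v (counts_of_vpart mu v) =
  op (F zeroV (p * (n - k))) (\big[op/idx]_(b | b != zero01) F (lift01 b) (p * mu b)).
Proof.
move=> F0; rewrite (@big_is01 _ _ op (fun v => F v (counts_of_vpart mu v))) => [|v v_non01].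
  rewrite (bigD1 zero01) //= lift01_zero counts_of_vpartE eqxx; congr (op _ _).
  apply: eq_bigr => b b_neq0.
  by rewrite counts_of_vpartE lift01_eq0 (negbTE b_neq0) is01_lift01 lift01K.
rewrite counts_of_vpartE (negbTE v_non01) ifN //; apply: contra v_non01 => /eqP ->.
by rewrite -lift01_zero is01_lift01.
Qed.

Lemma sum_counts_of_vpart mu :
  \sum_v (counts_of_vpart mu v : nat) = p * (n - k) + p * \sum_(b | b != zero01) (mu b : nat).
Proof. by rewrite (@big_counts_of_vpart _ _ _ (fun _ x => x)) // big_distrr. Qed.

Lemma column_sum_counts_of_vpart mu i :
  \sum_v (counts_of_vpart mu v : nat) * (v i : nat) = p * \sum_b (mu b : nat) * (b i : nat).
Proof.
rewrite (@big_counts_of_vpart _ _ _ (fun v x => x * (v i : nat))) // ffunE /= muln0.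
rewrite big_distrr [in RHS](bigD1 zero01) //= ffunE /= !muln0 add0n.
by apply: eq_bigr => b _; rewrite lift01E mulnA.
Qed.

Lemma pscaled_counts_of_vpart mu : pscaled (counts_of_vpart mu).
Proof.
by apply/forallP => v; rewrite counts_of_vpartE; case: ifP => _; last case: ifP;
  rewrite ?dvdn_mulr ?dvdn0.
Qed.

Lemma level_counts_of_vpart mu : level (counts_of_vpart mu) = k.
Proof. by rewrite /level counts_of_vpartE eqxx mulKn // subKn. Qed.

Lemma vpart_of_countsK mu :
  (vpart_of_counts (counts_of_vpart mu) == mu) = ((mu zero01 : nat) == 0).
Proof.
apply/eqP/eqP => [<-|mu0]; first by rewrite ffunE eqxx.
apply/ffunP => b; apply/val_inj; rewrite ffunE /=; case: eqP => [->|/eqP b_neq0] //.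
rewrite counts_of_vpartE lift01_eq0 (negbTE b_neq0) is01_lift01 lift01K mulKn //.
by rewrite inordK.
Qed.

Lemma counts_of_vpartK c :
  surviving c -> level c = k -> counts_of_vpart (vpart_of_counts c) = c.
Proof.
move=> surv lev; apply/ffunP => v; apply/val_inj; rewrite /= counts_of_vpartE.
case: eqP => [->|/eqP v_neq0]; first by rewrite surviving_zero // lev.
case: ifP => [v01|/negbT v_non01]; last by rewrite surviving_non01.
have b_neq0 : proj01 v != zero01 by rewrite -lift01_eq0 proj01K.
have /and3P [/forallP scaled _ _] := surv.
rewrite ffunE (negbTE b_neq0) proj01K // inordK; first by rewrite mulnC divnK.
by rewrite ltnS -lev -{1}(proj01K v01) leq_surviving_lift01.
Qed.

Lemma surviving_counts_of_vpart mu :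
  (surviving (counts_of_vpart mu) && (level (counts_of_vpart mu) == k))
    && (vpart_of_counts (counts_of_vpart mu) == mu) = is_vpart mu.
Proof.
rewrite /surviving pscaled_counts_of_vpart level_counts_of_vpart eqxx vpart_of_countsK.
rewrite /is_vpart /column_sums_p andbT /=.
have [mu0|_] := eqVneq (mu zero01 : nat) 0; last by rewrite !andbF.
have -> : [forall i, \sum_v (counts_of_vpart mu v : nat) * (v i : nat) == p] =
          [forall i, \sum_b (mu b : nat) * (b i : nat) == 1].
  by apply: eq_forallb => i; rewrite column_sum_counts_of_vpart -{2}(muln1 p) eqn_pmul2l.
rewrite sum_counts_of_vpart -mulnDr eqn_pmul2l // [in RHS](bigD1 zero01) //= mu0.
by rewrite andbT andbC; congr (_ && _); apply/eqP/eqP; lia.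
Qed.

Lemma vpart_le1 mu b : is_vpart mu -> mu b <= 1.
Proof.
move=> /and3P [_ /eqP mu0 /forallP col]; have [->|b_neq0] := eqVneq b zero01.
  by rewrite mu0.
have /existsP [i bi_neq0] : [exists i, b i != ord0].
  apply: contraR b_neq0 => /existsPn b0; apply/eqP/ffunP => i.
  by apply/eqP; rewrite ffunE -[_ == _]negbK b0.
have bi1 : b i = 1 :> nat by case: (b i) bi_neq0 => [[|[|]]].
by have := leq_summand (fun b' => mu b' * b' i) b; rewrite (eqP (col i)) /= bi1 muln1.
Qed.

Lemma sum_nonzero_vpart mu : is_vpart mu -> \sum_(b | b != zero01) (mu b : nat) = k.
Proof.
move=> /and3P [/eqP sum_mu /eqP mu0 _].
by rewrite -[RHS]sum_mu [RHS](bigD1 zero01) //= mu0.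
Qed.

Lemma factorials_counts_of_vpart mu : is_vpart mu ->
  \prod_v (counts_of_vpart mu v)`! = (p`!) ^ k * (p * (n - k))`!.
Proof.
move=> vp; rewrite (@big_counts_of_vpart _ _ _ (fun _ x => x`!)) // [RHS]mulnC; congr (_ * _).
rewrite -[in RHS](sum_nonzero_vpart vp) (big_morph _ (expnD p`!) (expn0 p`!)).
apply: eq_bigr => b _; have := vpart_le1 b vp.
by case: (mu b : nat) => [|[|]] //= _; rewrite ?muln0 ?muln1.
Qed.

Lemma multinomial_counts_of_vpart mu : is_vpart mu ->
  multinomial K (fun v => counts_of_vpart mu v) = K`! %/ ((p`!) ^ k * (p * (n - k))`!).
Proof.
move=> vp; rewrite -(factorials_counts_of_vpart vp).
rewrite -(@multinomial_fact _ K (fun v => counts_of_vpart mu v)) ?mulnK //.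
  by rewrite prodn_gt0 // => v; rewrite fact_gt0.
by rewrite sum_counts_of_vpart sum_nonzero_vpart // -mulnDr subnK.
Qed.

Lemma weight_counts_of_vpart mu : is_vpart mu ->
  weight (counts_of_vpart mu) =
  f [ffun _ => 0] ^ (p * (n - k)) * \prod_b hfun p f (vec_of01 b) ^ mu b.
Proof.
move=> /and3P [_ /eqP mu0 _].
rewrite /weight (@big_counts_of_vpart _ _ _ (fun v x => f (vec_of v) ^ x)) //.
congr (f _ ^ _ * _); first by apply/ffunP => i; rewrite !ffunE.
rewrite [in RHS](bigD1 zero01) //= mu0 expn0 mul1n; apply: eq_bigr => b b_neq0.
by rewrite vec_of_lift01 hfun_vec_of01 // expnM.
Qed.

Lemma sum_surviving_level :
  \sum_(c | surviving c && (level c == k)) multinomial K (fun v => c v) * weight c =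
  K`! %/ ((p`!) ^ k * (p * (n - k))`!) * f [ffun _ => 0] ^ (p * (n - k))
    * vpart_sum k (hfun p f).
Proof.
rewrite (reindex_onto counts_of_vpart vpart_of_counts) => [|c /andP [surv /eqP lev]].
  rewrite (eq_bigl is_vpart) => [|mu]; last exact: surviving_counts_of_vpart.
  rewrite /vpart_sum big_distrr /=; apply: eq_bigr => mu vp.
  by rewrite multinomial_counts_of_vpart // weight_counts_of_vpart // mulnA.
exact: counts_of_vpartK.
Qed.

End FixedLevel.

Lemma vpart_sum0 (g : vec N -> nat) : vpart_sum 0 g = 0.
Proof.
apply: big1 => mu /and3P [_ _ /forallP /(_ (Ordinal N_gt0))].
by rewrite big1 // => b _; rewrite [mu b]ord1.
Qed.

Lemma sum_surviving :
  \sum_(c | surviving c) multinomial K (fun v => c v) * weight c =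
  \sum_(1 <= k < n.+1)
     K`! %/ ((p`!) ^ k * (p * (n - k))`!) * f [ffun _ => 0] ^ (p * (n - k))
       * vpart_sum k (hfun p f).
Proof.
rewrite (eq_bigr (fun c => \sum_(0 <= k < n.+1 | level c == k)
                             multinomial K (fun v => c v) * weight c)) => [|c _]; last first.
  rewrite (eq_bigl (fun k => k == level c)) => [|k]; last by rewrite eq_sym.
  by rewrite big_nat1_eq ltnS leq_subr.
rewrite (exchange_big_dep xpredT) //= big_ltn // sum_surviving_level // vpart_sum0.
by rewrite muln0 add0n; apply: eq_big_nat => k /andP [_ k_le_n]; rewrite sum_surviving_level.
Qed.

Lemma sum_words_mod :
  \sum_(m : {ffun 'I_K -> V} | [forall i, \sum_(j < K) (m j i : nat) == p])
     \prod_(j < K) f (vec_of (m j))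
  = \sum_(1 <= k < n.+1)
     K`! %/ ((p`!) ^ k * (p * (n - k))`!) * f [ffun _ => 0] ^ (p * (n - k))
       * vpart_sum k (hfun p f) %[mod K].
Proof.
rewrite sum_words_by_counts (bigID pscaled) /= -sum_surviving.
have -> : \sum_(c | pscaled c)
            multinomial K (fun v => c v) * (if column_sums_p c then weight c else 0) =
          \sum_(c | surviving c) multinomial K (fun v => c v) * weight c.
  rewrite big_mkcond [RHS]big_mkcond; apply: eq_bigr => c _; rewrite /surviving.
  case: (pscaled c) (column_sums_p c) => [] [] //=; rewrite ?muln0 //.
  by case: eqP => // sum_c; rewrite multinomial_eq0 //; apply/eqP.
rewrite -modnDmr (eqP (_ : K %| \sum_(c | ~~ pscaled c) _)) ?addn0 //.
apply: dvdn_sum => c unscaled; case: ifP => [col|_]; last by rewrite muln0.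
by rewrite dvdn_mulr // dvdn_multinomial_unscaled.
Qed.

End Congruence.

Theorem theorem12 (N : nat) (f : vec N -> nat) (p n : nat) :
  0 < N -> prime p -> 0 < n ->
  binomf f (p * n) [ffun _ => p] =
  \sum_(1 <= k < n.+1)
     ((p * n)`! %/ ((p`!) ^ k * (p * (n - k))`!))
       * f [ffun _ => 0] ^ (p * (n - k)) * vpart_sum k (hfun p f)
  %[mod p * n].
Proof.
move=> N_gt0 p_prime _; rewrite /binomf; set B := \max_(i < N) _.
have B_gt0 : 0 < B by rewrite (leq_trans _ (leq_bigmax (Ordinal N_gt0))) // ffunE prime_gt0.
rewrite (eq_bigl (fun m : {ffun 'I_(p * n) -> {ffun 'I_N -> 'I_B.+1}} =>
                    [forall i, \sum_(j < p * n) (m j i : nat) == p])) => [|m].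
  exact: sum_words_mod.
by apply: eq_forallb => i; rewrite ffunE.
Qed.
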